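(* Let $(Q,X,\partial)$ be a twisted rack dynamical system. Then the rack cross-product $Q\rtimes_\partial X$ is finitely stable if and only if there exists a finite family $((\xi_i,t_i))_{i=1}^n$ of elements of $Q\times X$ such that $(t_1,\ldots,t_n)$ is a stabilizing family of $X$ and, for every $x\in X$, the function $Q\to Q$, $p\mapsto p_n$, is the identity of $Q$, where $x_0=x$, $p_0=p$, and recursively $p_j=\partial_{x_{j-1},t_j}(p_{j-1},\xi_j)$, $x_j=x_{j-1}\rhd t_j$ for $j=1,\ldots,n$.
   Context: A rack is a set with a binary operation $\rhd$ such that each right multiplication $x\mapsto x\rhd y$ is bijective and $(x\rhd y)\rhd z=(x\rhd z)\rhd(y\rhd z)$. A stabilizing family of a rack $X$ is a finite family $(u_1,\ldots,u_n)$ with $(\cdots(x\rhd u_1)\cdots)\rhd u_n=x$ for all $x$; $X$ is finitely stable if it has one. A rack action of $X$ on a set $M$ is a map $(m,x)\mapsto m\cdot x$ such that each $m\mapsto m\cdot x$ is bijective, $(m\cdot x)\cdot y=(m\cdot y)\cdot(x\rhd y)$, and for every stabilizing family $(u_1,\ldots,u_s)$ of $X$ and every cyclic shift $\sigma$ of $\{1,\ldots,s\}$, $(\cdots(m\cdot u_1)\cdots)\cdot u_s=(\cdots(m\cdot u_{\sigma(1)})\cdots)\cdot u_{\sigma(s)}$. For racks $X,Q$, an action of $X$ on $Q$ by rack automorphisms is a rack action such that each $p\mapsto p\cdot x$ is a rack automorphism of $Q$. An $X$-cocycle on $Q$ is a family of maps $\partial_{x,y}:Q\times Q\to Q$ ($x,y\in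 X$) such that (i) each $p\mapsto\partial_{x,y}(p,q)$ is a rack automorphism of $Q$; (ii) $\partial_{x,y}(p\cdot t,q)=\partial_{x,y}(p,q)\cdot(t\rhd y)$ for all $t\in X$; (iii) $\partial_{x\rhd y,z}(\partial_{x,y}(p,q),r)=\partial_{x\rhd z,y\rhd z}(\partial_{x,z}(p,r),\partial_{y,z}(q,r))$. A twisted rack dynamical system $(Q,X,\partial)$ is an action of $X$ on $Q$ by rack automorphisms together with an $X$-cocycle $\partial$ on $Q$. Its rack cross-product $Q\rtimes_\partial X$ is $Q\times X$ with $(p,x)\rhd_\partial(q,y)=(\partial_{x,y}(p,q),x\rhd y)$. *)

From mathcomp Require Import all_boot.
Set Implicit Arguments. Unset Strict Implicit. Unset Printing Implicit Defensive.

Definition is_rack (X : Type) (op : X -> X -> X) : Prop :=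
  (forall y : X, bijective (fun x => op x y)) /\
  (forall x y z : X, op (op x y) z = op (op x z) (op y z)).

Definition rack_iter (X : Type) (op : X -> X -> X) (x : X) (s : seq X) : X :=
  foldl op x s.

Definition stabilizing (X : Type) (op : X -> X -> X) (s : seq X) : Prop :=
  (0 < size s)%N /\ forall x : X, rack_iter op x s = x.

Definition finitely_stable (X : Type) (op : X -> X -> X) : Prop :=
  exists s : seq X, stabilizing op s.

Definition is_rack_action (X M : Type) (op : X -> X -> X)
    (act : M -> X -> M) : Prop :=
  (forall x : X, bijective (fun m => act m x)) /\
  (forall (m : M) (x y : X), act (act m x) y = act (act m y) (op x y)) /\
  (forall s : seq X, stabilizing op s ->
     forall (k : nat) (m : M), foldl act m s = foldl act m (rot k s)).

Definition rack_automorphism (Q : Type) (opQ : Q -> Q -> Q) (f : Q -> Q)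
  : Prop :=
  bijective f /\ forall p q : Q, f (opQ p q) = opQ (f p) (f q).

Definition is_action_by_automorphisms (X Q : Type) (op : X -> X -> X)
    (opQ : Q -> Q -> Q) (act : Q -> X -> Q) : Prop :=
  is_rack_action op act /\
  forall x : X, rack_automorphism opQ (fun p => act p x).

Definition is_cocycle (X Q : Type) (op : X -> X -> X) (opQ : Q -> Q -> Q)
    (act : Q -> X -> Q) (d : X -> X -> Q -> Q -> Q) : Prop :=
  (forall (x y : X) (q : Q), rack_automorphism opQ (fun p => d x y p q)) /\
  (forall (x y t : X) (p q : Q), d x y (act p t) q = act (d x y p q) (op t y)) /\
  (forall (x y z : X) (p q r : Q),
     d (op x y) z (d x y p q) r = d (op x z) (op y z) (d x z p r) (d y z q r)).

Definition twisted_rack_dynamical_system (X Q : Type) (op : X -> X -> X)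
    (opQ : Q -> Q -> Q) (act : Q -> X -> Q) (d : X -> X -> Q -> Q -> Q)
  : Prop :=
  is_rack op /\ is_rack opQ /\
  is_action_by_automorphisms op opQ act /\ is_cocycle op opQ act d.

Definition cross_op (X Q : Type) (op : X -> X -> X)
    (d : X -> X -> Q -> Q -> Q) (a b : Q * X) : Q * X :=
  (d a.2 b.2 a.1 b.1, op a.2 b.2).

Definition twisted_step (X Q : Type) (op : X -> X -> X)
    (d : X -> X -> Q -> Q -> Q) (st : Q * X) (e : Q * X) : Q * X :=
  let: (p, x) := st in let: (xi, t) := e in (d x t p xi, op x t).

Definition twisted_pn (X Q : Type) (op : X -> X -> X)
    (d : X -> X -> Q -> Q -> Q) (fam : seq (Q * X)) (x : X) (p : Q) : Q :=
  (foldl (twisted_step op d) (p, x) fam).1.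

From mathcomp Require Import all_boot.

Section CrossProduct.

Variables (X Q : Type) (op : X -> X -> X) (d : X -> X -> Q -> Q -> Q).

Lemma rack_iter_cross_op (fam : seq (Q * X)) (a : Q * X) :
  rack_iter (cross_op op d) a fam =
  (twisted_pn op d fam a.2 a.1, rack_iter op a.2 (map snd fam)).
Proof.
by elim: fam a => [|[xi t] fam IH] [p x] //=; rewrite /rack_iter /= IH.
Qed.

(* The nonemptiness of [fam] supplies an element of [Q], needed to read off
   the [X]-component of the stability condition. *)
Lemma stabilizing_cross_opE (fam : seq (Q * X)) :
  stabilizing (cross_op op d) fam <->
  stabilizing op (map snd fam) /\ forall x p, twisted_pn op d fam x p = p.
Proof.
rewrite /stabilizing size_map; split.
- case: fam => [[]//|[q0 t0] fam] [_ fixed]; split; [split=> // x|move=> x p].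
    by have := fixed (q0, x); rewrite rack_iter_cross_op => -[].
  by have := fixed (p, x); rewrite rack_iter_cross_op => -[].
- by move=> [[nonempty fixedX] fixedQ]; split=> // -[p x];
    rewrite rack_iter_cross_op /= fixedQ fixedX.
Qed.

End CrossProduct.

Theorem mainTheorem8 (X Q : Type) (op : X -> X -> X) (opQ : Q -> Q -> Q)
    (act : Q -> X -> Q) (d : X -> X -> Q -> Q -> Q) :
  twisted_rack_dynamical_system op opQ act d ->
  (finitely_stable (cross_op op d) <->
   exists fam : seq (Q * X),
     stabilizing op (map snd fam) /\
     forall x : X, forall p : Q, twisted_pn op d fam x p = p).
Proof.
by move=> _; split=> -[fam stable_fam]; exists fam; apply/stabilizing_cross_opE.
Qed.
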